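(* Let $\mathcal N$ be a fully connected feed-forward ReLU network with $d$ hidden layers. For all $\theta$ outside a Lebesgue-null subset of $\mathbb R^{\#\mathrm{params}}$ the following holds: whenever $\mathcal A_1\neq\mathcal A_2$ are activation patterns with $\mathcal R(\mathcal A_1;\theta)\neq\emptyset$ and $\mathcal R(\mathcal A_2;\theta)\neq\emptyset$, and such that for each $j\in\{1,2\}$ and each hidden layer there is a neuron $z$ in that layer with $a_{j,z}=1$, the (constant) value of $\nabla\mathcal N(x;\theta)$ for $x$ in $\mathcal R(\mathcal A_1;\theta)$ differs from its value for $x$ in $\mathcal R(\mathcal A_2;\theta)$.
   Context: A fully connected feed-forward ReLU network $\mathcal N$ with input dimension $n_{\mathrm{in}}$ and output dimension $1$ has hidden layers $1,\dots,d$, every neuron of layer $\ell-1$ (or every input coordinate, for $\ell=1$) joined to every neuron of layer $\ell$, each edge carrying its own weight. A neuron $z$ in layer $1$ has pre-activation $z(x;\theta)=\sum_i w_{z,i}x_i$; a neuron $z$ in layer $\ell\ge2$ has pre-activation $z(x;\theta)=\sum_{z'}w_{z,z'}\max\{0,z'(x;\theta)-b_{z'}\}$; $b_z$ is its bias. The output is $\mathcal N(x;\theta)=\sum_z w_z\max\{0,z(x;\theta)-b_z\}-b_{\mathrm{out}}$ over neurons of layer $d$. $\theta$ is the vector of all weights and biases. An activation pattern is $\mathcal A_j=\{a_{j,z}\}\in\{-1,1\}^{\#\mathrm{neurons}}$, with activation region $\mathcal R(\mathcal A_j;\theta)=\{x:\ \mathrm{sgn}(z(x;\theta)-b_z)=a_{j,z}\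 \forall z\}$; $\mathcal N(\cdot;\theta)$ is affine on each activation region. *)

From Stdlib Require Import Reals Lra Lia Arith List.
Open Scope R_scope.

Fixpoint rsum (n : nat) (f : nat -> R) : R :=
  match n with O => 0 | S m => rsum m f + f m end.
Fixpoint rprod (n : nat) (f : nat -> R) : R :=
  match n with O => 1 | S m => rprod m f * f m end.
Fixpoint nsum (n : nat) (f : nat -> nat) : nat :=
  match n with O => 0%nat | S m => (nsum m f + f m)%nat end.

(* Lebesgue-null subset of R^P (points of R^P are functions nat -> R of which
   only the coordinates 0..P-1 matter): for every eps > 0 it is covered by
   countably many closed boxes of total volume <= eps. *)
Definition lebesgue_null (P : nat) (S : (nat -> R) -> Prop) : Prop :=
  forall eps : R, 0 < eps ->
  exists a b : nat -> nat -> R,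
    (forall m i, a m i <= b m i) /\
    (forall th, S th -> exists m, forall i, (i < P)%nat -> a m i <= th i <= b m i) /\
    (forall M, rsum M (fun m => rprod P (fun i => b m i - a m i)) <= eps).

(* Architecture: input dimension n_in, hidden widths [n_1; ...; n_d].
   Hidden layer l (1 <= l <= d) is indexed here by k = l - 1. *)
Section Net.
Variable n_in : nat.
Variable widths : list nat.

Definition depth : nat := length widths.
Definition width (k : nat) : nat := nth k widths 0%nat.
Definition nprev (k : nat) : nat :=
  match k with O => n_in | S k' => width k' end.

(* layout of the parameter vector theta in R^P:
   for each hidden layer k: its weights, then its biases; then output weights
   and the output bias. *)
Definition off (k : nat) : nat := nsum k (fun m => nprev m * width m + width m)%nat.
Definition widx (k j i : nat) : nat := (off k + j * nprev k + i)%nat.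
Definition bidx (k j : nat) : nat := (off k + nprev k * width k + j)%nat.
Definition oidx (j : nat) : nat := (off depth + j)%nat.
Definition obidx : nat := (off depth + nprev depth)%nat.
Definition nparams : nat := (obidx + 1)%nat.

Definition relu (t : R) : R := Rmax 0 t.

(* post-activation outputs of "layer" k (k = 0: the input coordinates x_i;
   k+1: max{0, z - b_z} for neuron z of hidden layer k) *)
Fixpoint post (th : nat -> R) (x : nat -> R) (k : nat) : nat -> R :=
  match k with
  | O => x
  | S k' => fun j =>
      relu (rsum (nprev k') (fun i => th (widx k' j i) * post th x k' i)
            - th (bidx k' j))
  end.

Definition preact (th : nat -> R) (x : nat -> R) (k j : nat) : R :=
  rsum (nprev k) (fun i => th (widx k j i) * post th x k i).

Definition net (th : nat -> R) (x : nat -> R) : R :=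
  rsum (nprev depth) (fun j => th (oidx j) * post th x depth j) - th obidx.

(* activation patterns: A k j = true means a_z = 1, false means a_z = -1,
   for neuron j of hidden layer k (only k < depth, j < width k matter) *)
Definition pattern := nat -> nat -> bool.

Definition pattern_eq (A1 A2 : pattern) : Prop :=
  forall k j, (k < depth)%nat -> (j < width k)%nat -> A1 k j = A2 k j.

Definition in_region (A : pattern) (th : nat -> R) (x : nat -> R) : Prop :=
  forall k j, (k < depth)%nat -> (j < width k)%nat ->
    if A k j then preact th x k j - th (bidx k j) > 0
             else preact th x k j - th (bidx k j) < 0.

Definition active_each_layer (A : pattern) : Prop :=
  forall k, (k < depth)%nat -> exists j, (j < width k)%nat /\ A k j = true.

Definition unit_vec (i : nat) : nat -> R := fun m => if Nat.eqb m i then 1 else 0.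

Definition is_gradient (th : nat -> R) (x : nat -> R) (g : nat -> R) : Prop :=
  forall i, (i < n_in)%nat ->
    derivable_pt_lim (fun t => net th (fun m => x m + t * unit_vec i m)) 0 (g i).

End Net.

(* On the region of a pattern [A] the network is affine in the input, and its
   [i]-th partial derivative is a polynomial [gF A i] in the parameters: the sum,
   over the paths from input [i] to the output through neurons that are on in
   [A], of the products of the weights along the path ([Dv] computes it layer by
   layer).  Two admissible patterns differing at some neuron give polynomials
   whose difference is a nonzero polynomial, hence vanishes only on a null set.

   The key measure-theoretic fact,
   [null_affine], says that [th |-> al th * th v + be th] has a null zero set
   when [al], [be] are locally Lipschitz, do not involve the coordinate [v], and
   [al] has a null zero set; it is proved by a grid cover ([grid_cover]).
   The main theorem takes as null set the finite union, over pairs of admissible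
   patterns (enumerated up to [pattern_eq]), of the sets where the first partial
   derivatives coincide; the case without inputs is degenerate. *)

From Stdlib Require Import Reals Lra Lia Arith List FunctionalExtensionality ClassicalEpsilon Classical.
Open Scope R_scope.

Lemma rsum_ext n f g :
  (forall i, (i < n)%nat -> f i = g i) -> rsum n f = rsum n g.
Proof.
  induction n as [|n IH]; intros H; simpl; auto.
  rewrite IH, H; auto; intros; apply H; lia.
Qed.

Lemma rsum_plus n f g : rsum n (fun i => f i + g i) = rsum n f + rsum n g.
Proof. induction n; simpl; lra. Qed.

Lemma rsum_minus n f g : rsum n (fun i => f i - g i) = rsum n f - rsum n g.
Proof. induction n; simpl; lra. Qed.

Lemma rsum_scal n c f : rsum n (fun i => c * f i) = c * rsum n f.
Proof. induction n as [|n IH]; simpl; [ring|]. rewrite IH. ring. Qed.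

Lemma rsum_const n c : rsum n (fun _ => c) = INR n * c.
Proof. induction n as [|n IH]; simpl rsum; [simpl; ring|]. rewrite IH, S_INR. ring. Qed.

Lemma rsum_le n f g :
  (forall i, (i < n)%nat -> f i <= g i) -> rsum n f <= rsum n g.
Proof.
  induction n as [|n IH]; intros H; simpl; [lra|].
  assert (rsum n f <= rsum n g) by (apply IH; intros; apply H; lia).
  specialize (H n (Nat.lt_succ_diag_r n)). lra.
Qed.

Lemma rsum_nonneg n f : (forall i, (i < n)%nat -> 0 <= f i) -> 0 <= rsum n f.
Proof.
  intros H. rewrite <- (Rmult_0_r (INR n)), <- rsum_const. apply rsum_le. exact H.
Qed.

Lemma rsum_shift n f : rsum (S n) f = f 0%nat + rsum n (fun i => f (S i)).
Proof.
  induction n as [|n IH]; [simpl; ring|].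
  change (rsum (S (S n)) f) with (rsum (S n) f + f (S n)). rewrite IH. simpl. ring.
Qed.

Lemma rsum_split n f p :
  (p < n)%nat -> rsum n f = f p + rsum n (fun i => if Nat.eqb i p then 0 else f i).
Proof.
  induction n as [|n IH]; intros Hp; [lia|]. simpl.
  destruct (Nat.eq_dec p n) as [->|Hne].
  - rewrite Nat.eqb_refl, (rsum_ext n (fun i => if Nat.eqb i n then 0 else f i) f); [lra|].
    intros i Hi. destruct (Nat.eqb_spec i n); [lia|auto].
  - rewrite IH by lia. destruct (Nat.eqb_spec n p); [lia|lra].
Qed.

Lemma rsum_term_le n f p :
  (p < n)%nat -> (forall i, (i < n)%nat -> 0 <= f i) -> f p <= rsum n f.
Proof.
  intros Hp H. rewrite (rsum_split n f p Hp).
  assert (0 <= rsum n (fun i => if Nat.eqb i p then 0 else f i)); [|lra].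
  apply rsum_nonneg. intros i Hi. destruct (Nat.eqb i p); auto; lra.
Qed.

Lemma rprod_ext n f g :
  (forall i, (i < n)%nat -> f i = g i) -> rprod n f = rprod n g.
Proof.
  induction n as [|n IH]; intros H; simpl; auto.
  rewrite IH, H; auto; intros; apply H; lia.
Qed.

Lemma rprod_nonneg n f : (forall i, (i < n)%nat -> 0 <= f i) -> 0 <= rprod n f.
Proof.
  induction n as [|n IH]; intros H; simpl; [lra|].
  apply Rmult_le_pos; [apply IH; intros|]; apply H; lia.
Qed.

Lemma rprod_sel n v a b :
  (v < n)%nat -> rprod n (fun i => if Nat.eqb i v then a else b) = a * b ^ (n - 1).
Proof.
  induction n as [|n IH]; intros Hv; [lia|]. simpl rprod.
  destruct (Nat.eqb_spec n v) as [->|Hne].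
  - assert (Hb : rprod v (fun i => if Nat.eqb i v then a else b) = b ^ v).
    { rewrite (rprod_ext v _ (fun _ => b)).
      - clear. induction v as [|v IH]; simpl; [ring|]. rewrite IH. ring.
      - intros i Hi. destruct (Nat.eqb_spec i v); [lia|auto]. }
    rewrite Hb. replace (S v - 1)%nat with v by lia. ring.
  - rewrite IH by lia. replace (S n - 1)%nat with (S (n - 1)) by lia. simpl. ring.
Qed.

(* A box is a pair of corner vectors; only coordinates [< P] matter. *)
Definition box : Type := ((nat -> R) * (nat -> R))%type.
Definition valid (bx : box) : Prop := forall i, fst bx i <= snd bx i.
Definition inbox (P : nat) (bx : box) (th : nat -> R) : Prop :=
  forall i, (i < P)%nat -> fst bx i <= th i <= snd bx i.
Definition vol (P : nat) (bx : box) : R := rprod P (fun i => snd bx i - fst bx i).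
Fixpoint volL (P : nat) (l : list box) : R :=
  match l with nil => 0 | bx :: l => vol P bx + volL P l end.

Definition fcover (P : nat) (Z : (nat -> R) -> Prop) (d : R) : Prop :=
  exists l : list box, (forall bx, In bx l -> valid bx) /\
    (forall th, Z th -> exists bx, In bx l /\ inbox P bx th) /\ volL P l <= d.

(* Null sets, with covers presented as a sequence of finite families of boxes;
   this form is closed under unions without any reindexing. *)
Definition fnull (P : nat) (Z : (nat -> R) -> Prop) : Prop :=
  forall eps, 0 < eps -> exists L : nat -> list box,
    (forall N bx, In bx (L N) -> valid bx) /\
    (forall th, Z th -> exists N bx, In bx (L N) /\ inbox P bx th) /\
    (forall K, rsum K (fun N => volL P (L N)) <= eps).

Lemma vol_nonneg P bx : valid bx -> 0 <= vol P bx.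
Proof. intros H. apply rprod_nonneg. intros i _. specialize (H i). lra. Qed.

Lemma volL_nonneg P l : (forall bx, In bx l -> valid bx) -> 0 <= volL P l.
Proof.
  induction l as [|bx l IH]; intros H; simpl; [lra|].
  pose proof (vol_nonneg P bx (H bx (or_introl eq_refl))).
  assert (0 <= volL P l) by (apply IH; intros; apply H; right; auto). lra.
Qed.

Lemma volL_app P l1 l2 : volL P (l1 ++ l2) = volL P l1 + volL P l2.
Proof. induction l1; simpl; lra. Qed.

Lemma fnull_mono P (Z Z' : (nat -> R) -> Prop) :
  (forall th, Z th -> Z' th) -> fnull P Z' -> fnull P Z.
Proof.
  intros HZZ' HZ' eps He. destruct (HZ' eps He) as [L [HL1 [HL2 HL3]]].
  exists L. repeat split; auto.
Qed.

Lemma fnull_empty P : fnull P (fun _ => False).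
Proof.
  intros eps He. exists (fun _ => nil). repeat split; simpl; try tauto.
  intros K. rewrite rsum_const. lra.
Qed.

Lemma fnull_union P Z Z' : fnull P Z -> fnull P Z' -> fnull P (fun th => Z th \/ Z' th).
Proof.
  intros HZ HZ' eps He.
  destruct (HZ (eps / 2) ltac:(lra)) as [L1 [V1 [C1 B1]]].
  destruct (HZ' (eps / 2) ltac:(lra)) as [L2 [V2 [C2 B2]]].
  exists (fun N => L1 N ++ L2 N). repeat split.
  - intros N bx Hb. apply in_app_or in Hb as [Hb|Hb]; eauto.
  - intros th [Hs|Ht].
    + destruct (C1 th Hs) as [N [bx [Hb Hi]]]. exists N, bx. auto using in_or_app.
    + destruct (C2 th Ht) as [N [bx [Hb Hi]]]. exists N, bx. auto using in_or_app.
  - intros K. rewrite (rsum_ext K _ (fun N => volL P (L1 N) + volL P (L2 N))).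
    + rewrite rsum_plus. specialize (B1 K). specialize (B2 K). lra.
    + intros; apply volL_app.
Qed.

Lemma fnull_guard P (C : Prop) Z : (C -> fnull P Z) -> fnull P (fun th => C /\ Z th).
Proof.
  intros H. destruct (classic C) as [c|c].
  - apply (fnull_mono P _ Z); [tauto|auto].
  - apply (fnull_mono P _ (fun _ => False)); [tauto|apply fnull_empty].
Qed.

Lemma fnull_list P {X} (l : list X) (Z : X -> (nat -> R) -> Prop) :
  (forall x, In x l -> fnull P (Z x)) -> fnull P (fun th => exists x, In x l /\ Z x th).
Proof.
  induction l as [|x0 l IH]; intros H.
  - apply (fnull_mono P _ (fun _ => False)); [|apply fnull_empty].
    intros th [x [[] _]].
  - apply (fnull_mono P _ (fun th => Z x0 th \/ exists x, In x l /\ Z x th)).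
    + intros th [x [[<-|Hx] Hs]]; [left|right; exists x]; auto.
    + apply fnull_union; [apply H; left|apply IH; intros; apply H; right]; auto.
Qed.

Lemma geom_sum eps K : rsum K (fun n => eps / 2 ^ S n) = eps * (1 - / 2 ^ K).
Proof.
  induction K as [|K IH]; [simpl; field|].
  change (rsum (S K) (fun n => eps / 2 ^ S n))
    with (rsum K (fun n => eps / 2 ^ S n) + eps / 2 ^ S K).
  rewrite IH. assert (0 < 2 ^ K) by (apply pow_lt; lra). simpl. field. lra.
Qed.

(* Countable unions of sets with arbitrarily small finite covers are null:
   cover the [n]-th set with volume [eps / 2^(n+1)]. *)
Lemma fnull_countable P (Zf : nat -> (nat -> R) -> Prop) :
  (forall n d, 0 < d -> fcover P (Zf n) d) -> fnull P (fun th => exists n, Zf n th).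
Proof.
  intros H eps He.
  assert (Hd : forall n, 0 < eps / 2 ^ S n) by (intros; apply Rdiv_lt_0_compat, pow_lt; lra).
  destruct (choice (fun n l => (forall bx, In bx l -> valid bx) /\
     (forall th, Zf n th -> exists bx, In bx l /\ inbox P bx th) /\
     volL P l <= eps / 2 ^ S n)) as [L HL]; [intros n; exact (H n _ (Hd n))|].
  exists L. repeat split.
  - intros N bx. apply HL.
  - intros th [n Hn]. destruct (proj1 (proj2 (HL n)) th Hn) as [bx Hb]. exists n, bx. exact Hb.
  - intros K. eapply Rle_trans; [apply rsum_le; intros i _; apply (HL i)|].
    rewrite geom_sum. assert (0 < / 2 ^ K) by (apply Rinv_0_lt_compat, pow_lt; lra).
    assert (0 < eps * / 2 ^ K) by (apply Rmult_lt_0_compat; lra). lra.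
Qed.

Definition zb : box := (fun _ => 0, fun _ => 0).

Lemma vol_zb P : (0 < P)%nat -> vol P zb = 0.
Proof. intros HP. unfold vol. destruct P; [lia|]. simpl. ring. Qed.

Fixpoint flat (L : nat -> list box) (K : nat) : list box :=
  match K with O => nil | S k => flat L k ++ L k end.

Lemma flat_prefix L K K' : (K <= K')%nat -> exists r, flat L K' = flat L K ++ r.
Proof.
  induction 1 as [|K' _ [r Hr]]; [exists nil; rewrite app_nil_r; auto|].
  exists (r ++ L K'). simpl. rewrite Hr, app_assoc. auto.
Qed.

Lemma volL_flat P L K : volL P (flat L K) = rsum K (fun N => volL P (L N)).
Proof. induction K as [|K IH]; simpl; auto. rewrite volL_app, IH. auto. Qed.

(* When every family is nonempty, the [m]-th box of [flat L K] does not depend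
   on [K]: this defines the enumerating sequence of all boxes. *)
Definition enum_boxes (L : nat -> list box) (m : nat) : box := nth m (flat L (S m)) zb.

Lemma flat_length L K : (forall N, L N <> nil) -> (K <= length (flat L K))%nat.
Proof.
  intros HL. induction K as [|K IH]; simpl; [lia|]. rewrite length_app.
  destruct (L K) eqn:E; [contradiction (HL K)|]. simpl. lia.
Qed.

Lemma enum_boxes_nth L K m :
  (forall N, L N <> nil) -> (m < length (flat L K))%nat -> nth m (flat L K) zb = enum_boxes L m.
Proof.
  intros HL Hm. unfold enum_boxes. pose proof (flat_length L (S m) HL).
  destruct (le_ge_dec K (S m)) as [h|h];
    destruct (flat_prefix L _ _ h) as [r ->]; rewrite app_nth1; auto; lia.
Qed.

Lemma nth_vol_sum P l M :
  (0 < P)%nat -> (forall bx, In bx l -> valid bx) ->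
  rsum M (fun m => vol P (nth m l zb)) <= volL P l.
Proof.
  intros HP. revert M. induction l as [|bx l IH]; intros M Hv.
  - rewrite (rsum_ext M _ (fun _ => 0)), rsum_const; simpl; [lra|].
    intros [|i] _; apply vol_zb; auto.
  - destruct M as [|M].
    + simpl. pose proof (volL_nonneg P (bx :: l) Hv). simpl in *. lra.
    + rewrite rsum_shift. simpl.
      assert (rsum M (fun i => vol P (nth i l zb)) <= volL P l)
        by (apply IH; intros; apply Hv; right; auto). lra.
Qed.

(* In positive dimension, [fnull] sets are Lebesgue-null: enumerate the boxes
   of all families, each padded with the zero box to keep it nonempty. *)
Lemma fnull_lebesgue P Z : (0 < P)%nat -> fnull P Z -> lebesgue_null P Z.
Proof.
  intros HP H eps He. destruct (H eps He) as [L [Hval [Hcov Hvol]]].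
  set (L' := fun N => L N ++ zb :: nil).
  assert (HL' : forall N, L' N <> nil) by (intros N; unfold L'; destruct (L N); discriminate).
  assert (Hval' : forall K bx, In bx (flat L' K) -> valid bx).
  { induction K as [|K IH]; simpl; [tauto|]. intros bx Hb.
    apply in_app_or in Hb as [Hb|Hb]; auto. apply in_app_or in Hb as [Hb|[<-|[]]]; eauto.
    intros i; simpl; lra. }
  exists (fun m i => fst (enum_boxes L' m) i), (fun m i => snd (enum_boxes L' m) i).
  split; [|split].
  - intros m i. unfold enum_boxes.
    destruct (nth_in_or_default m (flat L' (S m)) zb) as [h|h].
    + apply (Hval' _ _ h).
    + rewrite h. simpl. lra.
  - intros th Hs. destruct (Hcov th Hs) as [N [bx [Hb Hi]]].
    assert (Hb' : In bx (L' N)) by (apply in_or_app; auto).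
    destruct (In_nth _ _ zb Hb') as [p [Hp Hnth]].
    exists (length (flat L' N) + p)%nat. intros i Hi'.
    rewrite <- (enum_boxes_nth L' (S N)); auto.
    + simpl. rewrite app_nth2, Nat.add_comm, Nat.add_sub, Hnth by lia. auto.
    + simpl. rewrite length_app. lia.
  - intros M.
    change (rsum M (fun m => vol P (enum_boxes L' m)) <= eps).
    rewrite (rsum_ext M _ (fun m => vol P (nth m (flat L' M) zb))).
    + eapply Rle_trans; [apply nth_vol_sum; auto; apply Hval'|].
      rewrite volL_flat. eapply Rle_trans; [|apply (Hvol M)]. right. apply rsum_ext.
      intros N _. unfold L'. rewrite volL_app. simpl. rewrite vol_zb; auto. ring.
    + intros m Hm. rewrite enum_boxes_nth; auto. pose proof (flat_length L' M HL'). lia.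
Qed.

(* The coefficients arising in the derivatives are polynomials in the
   parameters; what [null_affine] needs of them is local Lipschitz continuity
   and independence of a given coordinate. *)
Definition dist1 (P : nat) (th th' : nat -> R) : R := rsum P (fun i => Rabs (th i - th' i)).
Definition incube (P : nat) (N : R) (th : nat -> R) : Prop :=
  forall i, (i < P)%nat -> Rabs (th i) <= N.
Definition locLip (P : nat) (f : (nat -> R) -> R) : Prop :=
  forall N, 0 <= N -> exists L, 0 <= L /\ forall th th',
    incube P N th -> incube P N th' -> Rabs (f th - f th') <= L * dist1 P th th'.

Definition upd (th : nat -> R) (v : nat) (t : R) : nat -> R :=
  fun m => if Nat.eqb m v then t else th m.
Definition indep (v : nat) (f : (nat -> R) -> R) : Prop := forall th t, f (upd th v t) = f th.

Lemma dist1_nonneg P th th' : 0 <= dist1 P th th'.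
Proof. apply rsum_nonneg. intros; apply Rabs_pos. Qed.

Lemma incube_zero P N : 0 <= N -> incube P N (fun _ => 0).
Proof. intros HN i _. rewrite Rabs_R0. auto. Qed.

Lemma locLip_const P c : locLip P (fun _ => c).
Proof.
  intros N HN. exists 0. split; [lra|]. intros th th' _ _.
  rewrite Rminus_diag, Rabs_R0. pose proof (dist1_nonneg P th th'). lra.
Qed.

Lemma locLip_coord P w : (w < P)%nat -> locLip P (fun th => th w).
Proof.
  intros Hw N HN. exists 1. split; [lra|]. intros th th' _ _. rewrite Rmult_1_l.
  apply (rsum_term_le P (fun i => Rabs (th i - th' i)) w Hw). intros; apply Rabs_pos.
Qed.

Lemma locLip_plus P f g : locLip P f -> locLip P g -> locLip P (fun th => f th + g th).
Proof.
  intros Hf Hg N HN. destruct (Hf N HN) as [L1 [H1 F]], (Hg N HN) as [L2 [H2 G]].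
  exists (L1 + L2). split; [lra|]. intros th th' A B.
  specialize (F th th' A B). specialize (G th th' A B).
  replace (f th + g th - (f th' + g th')) with ((f th - f th') + (g th - g th')) by ring.
  eapply Rle_trans; [apply Rabs_triang|lra].
Qed.

Lemma locLip_minus P f g : locLip P f -> locLip P g -> locLip P (fun th => f th - g th).
Proof.
  intros Hf Hg. apply (locLip_plus P f (fun th => - g th)); auto.
  intros N HN. destruct (Hg N HN) as [L [HL G]]. exists L. split; auto. intros.
  replace (- g th - - g th') with (- (g th - g th')) by ring. rewrite Rabs_Ropp. auto.
Qed.

Lemma locLip_bound P f :
  locLip P f -> forall N, 0 <= N -> exists M, 0 <= M /\ forall th, incube P N th -> Rabs (f th) <= M.
Proof.
  intros Hf N HN. destruct (Hf N HN) as [L [HL F]].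
  assert (Hd : forall th, incube P N th -> dist1 P th (fun _ => 0) <= INR P * N).
  { intros th Hth. unfold dist1. rewrite <- rsum_const. apply rsum_le.
    intros i Hi. rewrite Rminus_0_r. auto. }
  pose proof (pos_INR P).
  exists (Rabs (f (fun _ => 0)) + L * (INR P * N)). split.
  - pose proof (Rabs_pos (f (fun _ => 0))).
    assert (0 <= L * (INR P * N)) by (apply Rmult_le_pos; nra). lra.
  - intros th Hth. specialize (F th _ Hth (incube_zero P N HN)).
    assert (L * dist1 P th (fun _ => 0) <= L * (INR P * N))
      by (apply Rmult_le_compat_l; auto).
    replace (f th) with ((f th - f (fun _ => 0)) + f (fun _ => 0)) by ring.
    eapply Rle_trans; [apply Rabs_triang|lra].
Qed.

Lemma locLip_mult P f g : locLip P f -> locLip P g -> locLip P (fun th => f th * g th).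
Proof.
  intros Hf Hg N HN.
  destruct (Hf N HN) as [L1 [H1 F]], (Hg N HN) as [L2 [H2 G]].
  destruct (locLip_bound P f Hf N HN) as [M1 [HM1 B1]].
  destruct (locLip_bound P g Hg N HN) as [M2 [HM2 B2]].
  exists (M1 * L2 + M2 * L1). split; [nra|]. intros th th' A B.
  specialize (F th th' A B). specialize (G th th' A B).
  specialize (B1 th A). specialize (B2 th' B). pose proof (dist1_nonneg P th th').
  replace (f th * g th - f th' * g th')
    with (f th * (g th - g th') + g th' * (f th - f th')) by ring.
  eapply Rle_trans; [apply Rabs_triang|]. rewrite !Rabs_mult.
  assert (Rabs (f th) * Rabs (g th - g th') <= M1 * (L2 * dist1 P th th'))
    by (apply Rmult_le_compat; auto; apply Rabs_pos).
  assert (Rabs (g th') * Rabs (f th - f th') <= M2 * (L1 * dist1 P th th'))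
    by (apply Rmult_le_compat; auto; apply Rabs_pos).
  nra.
Qed.

Lemma locLip_rsum P n (f : nat -> (nat -> R) -> R) :
  (forall j, (j < n)%nat -> locLip P (f j)) -> locLip P (fun th => rsum n (fun j => f j th)).
Proof.
  induction n as [|n IH]; intros H; [apply (locLip_const P 0)|].
  apply (locLip_plus P (fun th => rsum n (fun j => f j th)) (f n));
    [apply IH; intros|]; apply H; lia.
Qed.

Lemma indep_coord v w : w <> v -> indep v (fun th => th w).
Proof. intros H th t. unfold upd. destruct (Nat.eqb_spec w v); [lia|auto]. Qed.

Lemma indep_minus v f g : indep v f -> indep v g -> indep v (fun th => f th - g th).
Proof. intros Hf Hg th t. rewrite Hf, Hg; auto. Qed.

Lemma indep_mult v f g : indep v f -> indep v g -> indep v (fun th => f th * g th).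
Proof. intros Hf Hg th t. rewrite Hf, Hg; auto. Qed.

Lemma indep_rsum v n (f : nat -> (nat -> R) -> R) :
  (forall j, (j < n)%nat -> indep v (f j)) -> indep v (fun th => rsum n (fun j => f j th)).
Proof. intros H th t. apply rsum_ext. intros; apply H; auto. Qed.

(* Multi-indices of the cells of a grid with [K] cells per side in the
   coordinates [i < n], [i <> v] (the coordinate [v] is left undivided). *)
Definition updn (c : nat -> nat) (m r : nat) : nat -> nat :=
  fun i => if Nat.eqb i m then r else c i.
Fixpoint cells (v K n : nat) : list (nat -> nat) :=
  match n with
  | O => (fun _ => 0%nat) :: nil
  | S m => if Nat.eqb m v then cells v K m
           else flat_map (fun c => map (fun r => updn c m r) (seq 0 K)) (cells v K m)
  end.

Lemma length_cells v K n :
  length (cells v K n) = (K ^ (if Nat.ltb v n then n - 1 else n))%nat.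
Proof.
  induction n as [|n IH]; [reflexivity|]. cbn [cells].
  destruct (Nat.eqb_spec n v) as [->|Hne].
  - rewrite IH, Nat.ltb_irrefl. destruct (Nat.ltb_spec v (S v)); [|lia].
    replace (S v - 1)%nat with v by lia. auto.
  - assert (Hlen : forall l : list (nat -> nat),
      length (flat_map (fun c => map (fun r => updn c n r) (seq 0 K)) l) = (K * length l)%nat).
    { induction l as [|c l IHl]; simpl; [lia|].
      rewrite length_app, length_map, length_seq, IHl. lia. }
    rewrite Hlen, IH.
    destruct (Nat.ltb_spec v n), (Nat.ltb_spec v (S n)); try lia.
    + replace (S n - 1)%nat with (S (n - 1)) by lia. auto.
    + auto.
Qed.

Lemma cells_cover v K n (Q : nat -> nat -> Prop) :
  (forall i, (i < n)%nat -> i <> v -> exists r, (r < K)%nat /\ Q i r) ->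
  exists c, In c (cells v K n) /\
    forall i, (i < n)%nat -> i <> v -> (c i < K)%nat /\ Q i (c i).
Proof.
  induction n as [|n IH]; intros H.
  - exists (fun _ => 0%nat). split; [left; auto|]. intros; lia.
  - destruct IH as [c [Hc Hq]]; [intros; apply H; lia|]. simpl.
    destruct (Nat.eqb_spec n v) as [->|Hne].
    + exists c. split; auto. intros i Hi Hv. apply Hq; lia.
    + destruct (H n (Nat.lt_succ_diag_r n) Hne) as [r [Hr Qr]].
      exists (updn c n r). split.
      * apply in_flat_map. exists c. split; auto. apply in_map, in_seq. lia.
      * intros i Hi Hv. unfold updn. destruct (Nat.eqb_spec i n); subst; auto. apply Hq; lia.
Qed.

Lemma grid_index K h y :
  (1 <= K)%nat -> 0 < h -> 0 <= y <= INR K * h ->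
  exists r, (r < K)%nat /\ INR r * h <= y <= (INR r + 1) * h.
Proof.
  induction K as [|K IH]; intros HK Hh Hy; [lia|].
  destruct (Nat.eq_dec K 0) as [->|HK0]; [exists 0%nat; simpl in *; split; [lia|lra]|].
  destruct (Rle_lt_dec y (INR K * h)) as [Hle|Hgt].
  - destruct IH as [r [Hr Hr2]]; auto; [lia|lra|]. exists r. split; auto.
  - exists K. rewrite S_INR in Hy. split; [lia|lra].
Qed.

Lemma root_localization a0 b0 a1 b1 t N ea eb :
  0 < N -> Rabs t <= N -> 1 <= N * Rabs a0 -> a0 * t + b0 = 0 ->
  Rabs (a1 - a0) <= ea -> Rabs (b1 - b0) <= eb -> 2 * N * ea <= 1 ->
  Rabs (t - - b1 / a1) <= 2 * N * (ea * N + eb).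
Proof.
  intros HN Ht Ha0 Hroot Ha Hb Hea.
  assert (Hval : Rabs (a1 * t + b1) <= ea * N + eb).
  { replace (a1 * t + b1) with ((a1 - a0) * t + (b1 - b0)) by lra.
    eapply Rle_trans; [apply Rabs_triang|]. rewrite Rabs_mult.
    assert (Rabs (a1 - a0) * Rabs t <= ea * N)
      by (apply Rmult_le_compat; auto; apply Rabs_pos). lra. }
  assert (Ha1 : 1 <= 2 * N * Rabs a1).
  { pose proof (Rabs_triang_inv a0 (a0 - a1)). rewrite Rabs_minus_sym in Ha.
    replace (a0 - (a0 - a1)) with a1 in H by ring. nra. }
  assert (Hne : a1 <> 0) by (intros E; rewrite E, Rabs_R0 in Ha1; lra).
  replace (t - - b1 / a1) with ((a1 * t + b1) / a1) by (field; auto).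
  unfold Rdiv. rewrite Rabs_mult, Rabs_inv.
  assert (Hpos : 0 < Rabs a1) by (apply Rabs_pos_lt; auto).
  apply (Rmult_le_reg_r (Rabs a1)); auto.
  rewrite Rmult_assoc, Rinv_l, Rmult_1_r by lra.
  pose proof (Rabs_pos (a1 * t + b1)). nra.
Qed.

Lemma fine_mesh N s : 0 < N -> 0 < s -> exists K, (1 <= K)%nat /\ 0 < 2 * N / INR K <= s.
Proof.
  intros HN Hs. destruct (INR_unbounded (2 * N / s)) as [k Hk].
  exists (S k). rewrite S_INR. pose proof (pos_INR k). split; [lia|split].
  - apply Rdiv_lt_0_compat; lra.
  - assert (Hq : 2 * N = 2 * N / s * s) by (field; lra).
    assert (Hd : 2 * N / (INR k + 1) * (INR k + 1) = 2 * N) by (field; lra).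
    nra.
Qed.

Definition cell_box (v : nat) (N h : R) (c : nat -> nat) (phi rho : R) : box :=
  (fun i => if Nat.eqb i v then phi - rho else - N + INR (c i) * h,
   fun i => if Nat.eqb i v then phi + rho else - N + (INR (c i) + 1) * h).
Definition cell_center (v : nat) (N h : R) (c : nat -> nat) : nat -> R :=
  fun i => if Nat.eqb i v then 0 else - N + (INR (c i) + / 2) * h.

Lemma vol_cell_box P v N h c phi rho :
  (v < P)%nat -> vol P (cell_box v N h c phi rho) = 2 * rho * h ^ (P - 1).
Proof.
  intros Hv. unfold vol, cell_box. simpl.
  rewrite (rprod_ext P _ (fun i => if Nat.eqb i v then 2 * rho else h)), rprod_sel; auto.
  intros i _. destruct (Nat.eqb i v); ring.
Qed.

Lemma volL_map_const P {X} (g : X -> box) (l : list X) w :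
  (forall c, In c l -> vol P (g c) = w) -> volL P (map g l) = INR (length l) * w.
Proof.
  induction l as [|c l IH]; intros H; cbn [map volL length]; [simpl; ring|].
  rewrite S_INR, IH, H by (try (left; auto); intros; apply H; right; auto). ring.
Qed.

Lemma abs_between x r : Rabs x <= r -> - r <= x <= r.
Proof.
  intros H. pose proof (Rle_abs x). pose proof (Rle_abs (- x)). rewrite Rabs_Ropp in *. lra.
Qed.

(* Covering the zero set of [th |-> al th * th v + be th] inside the cube
   [-N, N]^P, where [al] stays away from 0 and [al], [be] are Lipschitz with
   constants [La], [Lb] and do not involve [th v]: over each cell of a grid of
   mesh [h] in the other coordinates, [th v] is pinned to within [O(h)] of the
   root computed at the center of the cell. *)
Section GridCover.
Variables (P v : nat) (al be : (nat -> R) -> R) (N La Lb : R).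
Hypotheses (Hv : (v < P)%nat) (HN : 1 <= N) (HLa : 0 <= La) (HLb : 0 <= Lb).
Hypothesis Fa : forall th th', incube P N th -> incube P N th' ->
  Rabs (al th - al th') <= La * dist1 P th th'.
Hypothesis Fb : forall th th', incube P N th -> incube P N th' ->
  Rabs (be th - be th') <= Lb * dist1 P th th'.
Hypotheses (Ial : indep v al) (Ibe : indep v be).

Definition root_radius (h : R) : R := N * (La * N + Lb) * INR P * h.

Definition root_box (h : R) (c : nat -> nat) : box :=
  let y := cell_center v N h c in cell_box v N h c (- be y / al y) (root_radius h).

Lemma root_radius_nonneg h : 0 <= h -> 0 <= root_radius h.
Proof.
  intros Hh. pose proof (pos_INR P). unfold root_radius.
  repeat apply Rmult_le_pos; nra.
Qed.

Lemma root_box_covers h K c th :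
  0 < h -> INR K * h = 2 * N -> N * La * INR P * h <= 1 ->
  incube P N th -> 1 <= N * Rabs (al th) -> al th * th v + be th = 0 ->
  (forall i, (i < P)%nat -> i <> v ->
    (c i < K)%nat /\ - N + INR (c i) * h <= th i <= - N + (INR (c i) + 1) * h) ->
  inbox P (root_box h c) th.
Proof.
  intros Hh HKh Hmesh Hc Ha Hz Hcell. pose proof (pos_INR P).
  set (y := cell_center v N h c). set (th0 := upd th v 0).
  assert (Hc0 : incube P N th0).
  { intros i Hi. unfold th0, upd. destruct (Nat.eqb i v); [rewrite Rabs_R0; lra|auto]. }
  assert (Hcy : incube P N y).
  { intros i Hi. unfold y, cell_center. destruct (Nat.eqb_spec i v); [rewrite Rabs_R0; lra|].
    destruct (Hcell i Hi n) as [Hci _].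
    assert (INR (c i) + 1 <= INR K) by (rewrite <- S_INR; apply le_INR; lia).
    pose proof (pos_INR (c i)). apply Rabs_le. nra. }
  assert (Hdist : dist1 P th0 y <= INR P * (h / 2)).
  { unfold dist1. rewrite <- rsum_const. apply rsum_le. intros i Hi.
    unfold th0, upd, y, cell_center. destruct (Nat.eqb_spec i v).
    - rewrite Rminus_0_r, Rabs_R0. lra.
    - destruct (Hcell i Hi n) as [_ Hq]. apply Rabs_le. lra. }
  assert (Ea : Rabs (al y - al th) <= La * (INR P * (h / 2))).
  { rewrite <- (Ial th 0), Rabs_minus_sym. eapply Rle_trans; [apply Fa; auto|].
    apply Rmult_le_compat_l; auto. }
  assert (Eb : Rabs (be y - be th) <= Lb * (INR P * (h / 2))).
  { rewrite <- (Ibe th 0), Rabs_minus_sym. eapply Rle_trans; [apply Fb; auto|].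
    apply Rmult_le_compat_l; auto. }
  assert (Hpin : Rabs (th v - - be y / al y) <= root_radius h).
  { replace (root_radius h) with (2 * N * (La * (INR P * (h / 2)) * N
      + Lb * (INR P * (h / 2)))) by (unfold root_radius; field).
    apply root_localization with (a0 := al th) (b0 := be th); auto;
      first [lra | apply (Hc v Hv) | nra]. }
  intros i Hi. unfold root_box, cell_box. fold y. simpl.
  destruct (Nat.eqb_spec i v) as [->|Hne].
  - apply abs_between in Hpin. lra.
  - apply Hcell; auto.
Qed.

Lemma grid_cover_lip d :
  0 < d -> fcover P (fun th => incube P N th /\ 1 <= N * Rabs (al th) /\ al th * th v + be th = 0) d.
Proof.
  intros Hd. pose proof (pos_INR P).
  set (W := 2 * (N * (La * N + Lb) * INR P) * (2 * N) ^ (P - 1)).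
  assert (HW : 0 <= W).
  { unfold W. assert (0 <= (2 * N) ^ (P - 1)) by (apply pow_le; lra). repeat apply Rmult_le_pos; nra. }
  set (X := N * La * INR P).
  assert (HX : 0 <= X) by (unfold X; repeat apply Rmult_le_pos; lra).
  destruct (fine_mesh N (Rmin (/ (X + 1)) (d / (W + 1)))) as [K [HK [Hh Hsmall]]]; [lra|..].
  { apply Rmin_glb_lt; [apply Rinv_0_lt_compat|apply Rdiv_lt_0_compat]; lra. }
  set (h := 2 * N / INR K) in Hh, Hsmall.
  assert (HKh : INR K * h = 2 * N) by (assert (0 < INR K) by (apply lt_0_INR; lia); unfold h; field; lra).
  assert (HXh : X * h <= 1).
  { assert (h <= / (X + 1)) by (eapply Rle_trans; [apply Hsmall|apply Rmin_l]).
    assert (X * h <= X * / (X + 1)) by (apply Rmult_le_compat_l; lra).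
    assert (X * / (X + 1) = 1 - / (X + 1)) by (field; lra).
    assert (0 < / (X + 1)) by (apply Rinv_0_lt_compat; lra). lra. }
  assert (HWh : W * h < d).
  { assert (h <= d / (W + 1)) by (eapply Rle_trans; [apply Hsmall|apply Rmin_r]).
    assert (d / (W + 1) * (W + 1) = d) by (field; lra). nra. }
  exists (map (root_box h) (cells v K P)). split; [|split].
  - intros b Hb. apply in_map_iff in Hb as [c [<- _]]. intros i. unfold root_box, cell_box. simpl.
    pose proof (root_radius_nonneg h ltac:(lra)). destruct (Nat.eqb i v); nra.
  - intros th [Hc [Ha Hz]].
    destruct (cells_cover v K P (fun i r => - N + INR r * h <= th i <= - N + (INR r + 1) * h))
      as [c [Hcin Hcq]].
    { intros i Hi _. pose proof (abs_between _ _ (Hc i Hi)).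
      destruct (grid_index K h (th i + N)) as [r [Hr Hr2]]; auto; [lra|].
      exists r. split; auto. lra. }
    exists (root_box h c). split; [apply in_map; auto|].
    apply (root_box_covers h K); auto.
  - rewrite (volL_map_const P (root_box h) _ (2 * root_radius h * h ^ (P - 1))).
    + rewrite length_cells, pow_INR. destruct (Nat.ltb_spec v P); [|lia].
      replace (INR K ^ (P - 1) * (2 * root_radius h * h ^ (P - 1))) with (W * h)
        by (unfold W, root_radius; rewrite <- HKh, Rpow_mult_distr; ring). lra.
    + intros c _. apply vol_cell_box; auto.
Qed.

End GridCover.

Lemma grid_cover P v (al be : (nat -> R) -> R) N d :
  (v < P)%nat -> 1 <= N -> locLip P al -> locLip P be -> indep v al -> indep v be -> 0 < d ->
  fcover P (fun th => incube P N th /\ 1 <= N * Rabs (al th) /\ al th * th v + be th = 0) d.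
Proof.
  intros Hv HN Lal Lbe Ial Ibe Hd.
  destruct (Lal N ltac:(lra)) as [La [HLa Fa]], (Lbe N ltac:(lra)) as [Lb [HLb Fb]].
  apply (grid_cover_lip P v al be N La Lb); auto.
Qed.

Lemma incube_exists P th : exists N, 1 <= N /\ incube P N th.
Proof.
  induction P as [|P [N [HN H]]]; [exists 1; split; [lra|intros i Hi; lia]|].
  exists (Rmax N (Rabs (th P))). split; [eapply Rle_trans; [exact HN|apply Rmax_l]|].
  intros i Hi. destruct (Nat.eq_dec i P) as [->|Hne]; [apply Rmax_r|].
  eapply Rle_trans; [apply H; lia|apply Rmax_l].
Qed.

(* If [al] and [be] are locally Lipschitz and do not involve [th v], and the
   zero set of [al] is null, then so is the zero set of [al th * th v + be th]:
   off the zero set of [al] it is a countable union of grid-coverable pieces. *)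
Lemma null_affine P v al be :
  (v < P)%nat -> locLip P al -> locLip P be -> indep v al -> indep v be ->
  fnull P (fun th => al th = 0) -> fnull P (fun th => al th * th v + be th = 0).
Proof.
  intros Hv La Lb Ia Ib H0.
  set (piece := fun (n : nat) th =>
    incube P (INR (S n)) th /\ 1 <= INR (S n) * Rabs (al th) /\ al th * th v + be th = 0).
  apply (fnull_mono P _ (fun th => al th = 0 \/ exists n, piece n th)).
  - intros th Hz. destruct (Req_dec (al th) 0) as [E|E]; [left; auto|right].
    destruct (incube_exists P th) as [M [HM Hc]].
    assert (Hp : 0 < Rabs (al th)) by (apply Rabs_pos_lt; auto).
    destruct (INR_unbounded (Rmax M (/ Rabs (al th)))) as [n Hn].
    pose proof (Rmax_l M (/ Rabs (al th))). pose proof (Rmax_r M (/ Rabs (al th))).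
    assert (HSn : INR (S n) > Rmax M (/ Rabs (al th))) by (rewrite S_INR; lra).
    exists n. split; [|split; auto].
    + intros i Hi. specialize (Hc i Hi). lra.
    + assert (/ Rabs (al th) * Rabs (al th) = 1) by (field; lra).
      assert (/ Rabs (al th) * Rabs (al th) <= INR (S n) * Rabs (al th))
        by (apply Rmult_le_compat_r; lra). lra.
  - apply fnull_union; auto. apply fnull_countable. intros n d Hd.
    apply grid_cover; auto. rewrite S_INR. pose proof (pos_INR n). lra.
Qed.

(* A sum [sum_x th (w x) * E x th] whose weights [th (w x)] are distinct
   coordinates [>= b] and whose coefficients are locally Lipschitz and only
   involve coordinates [< b] vanishes only on a null set, as soon as one
   coefficient does: it is affine in the weight of that coefficient. *)
Lemma null_weighted_sum P b n (w : nat -> nat) (E : nat -> (nat -> R) -> R) p :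
  (forall x, (x < n)%nat -> (b <= w x < P)%nat) ->
  (forall x y, (x < n)%nat -> (y < n)%nat -> w x = w y -> x = y) ->
  (forall x, (x < n)%nat -> locLip P (E x)) ->
  (forall x v, (x < n)%nat -> (b <= v)%nat -> indep v (E x)) ->
  (p < n)%nat -> fnull P (fun th => E p th = 0) ->
  fnull P (fun th => rsum n (fun x => th (w x) * E x th) = 0).
Proof.
  intros Hw Hinj HL HI Hp H0.
  set (rest := fun th => rsum n (fun x => if Nat.eqb x p then 0 else th (w x) * E x th)).
  apply (fnull_mono P _ (fun th => E p th * th (w p) + rest th = 0)).
  { intros th Hz. rewrite <- Hz, (rsum_split n _ p Hp). unfold rest. ring. }
  destruct (Hw p Hp) as [Hbp HpP].
  apply null_affine; auto.
  - apply (locLip_rsum P n (fun x th => if Nat.eqb x p then 0 else th (w x) * E x th)).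
    intros x Hx. destruct (Nat.eqb x p); [apply locLip_const|].
    apply (locLip_mult P (fun th => th (w x)) (E x)); auto.
    apply locLip_coord. apply Hw; auto.
  - apply (indep_rsum _ n (fun x th => if Nat.eqb x p then 0 else th (w x) * E x th)).
    intros x Hx. destruct (Nat.eqb_spec x p) as [_|Hne]; [intros th t; auto|].
    apply (indep_mult _ (fun th => th (w x)) (E x)); auto.
    apply indep_coord. intros E'. apply Hne, Hinj; auto.
Qed.

Section Derivatives.
Variable n_in : nat.
Variable widths : list nat.
Local Notation NP := (nparams n_in widths).
Local Notation np := (nprev n_in widths).
Local Notation wd := (width widths).
Local Notation dp := (depth widths).
Local Notation wi := (widx n_in widths).
Local Notation oi := (oidx n_in widths).
Local Notation ofs := (off n_in widths).

Lemma width_lt k : (0 < wd k)%nat -> (k < dp)%nat.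
Proof.
  unfold width, depth. intros H. destruct (Nat.lt_ge_cases k (length widths)); auto.
  rewrite nth_overflow in H; lia.
Qed.

Lemma off_S k : ofs (S k) = (ofs k + (np k * wd k + wd k))%nat.
Proof. reflexivity. Qed.

Lemma off_mono k k' : (k <= k')%nat -> (ofs k <= ofs k')%nat.
Proof. induction 1; auto. rewrite off_S. lia. Qed.

Lemma widx_range k j i :
  (j < wd k)%nat -> (i < np k)%nat -> (ofs k <= wi k j i < ofs (S k))%nat.
Proof. intros. rewrite off_S. unfold widx. nia. Qed.

Lemma widx_P k j i : (j < wd k)%nat -> (i < np k)%nat -> (wi k j i < NP)%nat.
Proof.
  intros Hj Hi. assert (k < dp)%nat by (apply width_lt; lia).
  pose proof (widx_range k j i Hj Hi). pose proof (off_mono (S k) dp ltac:(lia)).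
  unfold nparams, obidx. lia.
Qed.

Lemma oidx_range j : (j < np dp)%nat -> (ofs dp <= oi j < NP)%nat.
Proof. intros. unfold nparams, obidx, oidx. lia. Qed.

(* [Dv A i m j th]: derivative in the input direction [i] of the output of
   neuron [j] of layer [m] (layer 0 = the inputs) on the region of pattern [A]. *)
Fixpoint Dv (A : pattern) (i m j : nat) (th : nat -> R) {struct m} : R :=
  match m with
  | O => unit_vec i j
  | S m' => if A m' j then rsum (np m') (fun x => th (wi m' j x) * Dv A i m' x th) else 0
  end.

Lemma Dv_on A i m j th :
  A m j = true -> Dv A i (S m) j th = rsum (np m) (fun x => th (wi m j x) * Dv A i m x th).
Proof. intros HA. simpl. rewrite HA. auto. Qed.

(* [Dv] is a polynomial in the parameters, hence locally Lipschitz. *)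
Lemma Dv_locLip A i m j : (j < np m)%nat -> locLip NP (Dv A i m j).
Proof.
  revert j; induction m as [|m IH]; intros j Hj; simpl; [apply locLip_const|].
  destruct (A m j); [|apply locLip_const].
  apply (locLip_rsum NP (np m) (fun x th => th (wi m j x) * Dv A i m x th)).
  intros x Hx. apply (locLip_mult NP (fun th => th (wi m j x)) (Dv A i m x)); auto.
  apply locLip_coord, widx_P; auto.
Qed.

Lemma Dv_indep A i m j v : (j < np m)%nat -> (ofs m <= v)%nat -> indep v (Dv A i m j).
Proof.
  revert j; induction m as [|m IH]; intros j Hj Hv; [intros th t; auto|]. simpl.
  destruct (A m j); [|intros th t; auto].
  apply (indep_rsum v (np m) (fun x th => th (wi m j x) * Dv A i m x th)).
  intros x Hx. pose proof (widx_range m j x Hj Hx).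
  apply (indep_mult v (fun th => th (wi m j x)) (Dv A i m x)).
  - apply indep_coord. lia.
  - apply IH; auto. pose proof (off_mono m (S m) ltac:(lia)). lia.
Qed.

Lemma null_layer_sum m l (E : nat -> (nat -> R) -> R) p :
  (l < wd m)%nat -> (forall x, (x < np m)%nat -> locLip NP (E x)) ->
  (forall x v, (x < np m)%nat -> (ofs m <= v)%nat -> indep v (E x)) ->
  (p < np m)%nat -> fnull NP (fun th => E p th = 0) ->
  fnull NP (fun th => rsum (np m) (fun x => th (wi m l x) * E x th) = 0).
Proof.
  intros Hl HL HI Hp H0. apply (null_weighted_sum NP (ofs m) _ (wi m l) E p); auto.
  - intros x Hx. pose proof (widx_range m l x Hl Hx). pose proof (widx_P m l x Hl Hx). lia.
  - unfold widx. intros; lia.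
Qed.

Definition neuron_on (A : pattern) (i m j : nat) : Prop :=
  match m with O => j = i | S m' => A m' j = true end.

Lemma neuron_on_exists A i m :
  (i < n_in)%nat -> active_each_layer widths A -> (m <= dp)%nat ->
  exists p, (p < np m)%nat /\ neuron_on A i m p.
Proof.
  intros Hi Hact Hm. destruct m as [|m]; [exists i; simpl; auto|].
  destruct (Hact m ltac:(lia)) as [p Hp]. exists p. exact Hp.
Qed.

(* Along a path of active neurons the derivative is a nonzero polynomial in the
   weights, so it vanishes only on a null set. *)
Lemma Dv_nonzero A i :
  (i < n_in)%nat -> active_each_layer widths A ->
  forall m j, (j < np m)%nat -> neuron_on A i m j -> fnull NP (fun th => Dv A i m j th = 0).
Proof.
  intros Hi Hact. induction m as [|m IH]; intros j Hj Hon.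
  - simpl in Hon. subst j. apply (fnull_mono NP _ (fun _ => False)); [|apply fnull_empty].
    intros th. simpl. unfold unit_vec. rewrite Nat.eqb_refl. lra.
  - simpl in Hj, Hon. assert (Hm : (m < dp)%nat) by (apply width_lt; lia).
    destruct (neuron_on_exists A i m Hi Hact ltac:(lia)) as [p [Hp Hpon]].
    apply (fnull_mono NP _ (fun th => rsum (np m) (fun x => th (wi m j x) * Dv A i m x th) = 0)).
    { intros th. rewrite Dv_on; auto. }
    apply (null_layer_sum m j _ p); auto using Dv_locLip, Dv_indep.
Qed.

Lemma Dv_separate A1 A2 i :
  (i < n_in)%nat -> active_each_layer widths A1 -> active_each_layer widths A2 ->
  forall m, (m <= dp)%nat ->
  (exists k j, (k < m)%nat /\ (j < wd k)%nat /\ A1 k j <> A2 k j) ->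
  exists j, (j < np m)%nat /\ fnull NP (fun th => Dv A1 i m j th - Dv A2 i m j th = 0).
Proof.
  intros Hi H1 H2. induction m as [|m IH]; intros Hm [k [j [Hk [Hj Hd]]]]; [lia|].
  destruct (classic (exists l, (l < wd m)%nat /\ A1 m l <> A2 m l)) as [[l [Hl Hd2]]|Hno].
  - (* The patterns differ at neuron [l] of layer [m]: one of the derivatives is 0. *)
    exists l. split; [exact Hl|].
    destruct (A1 m l) eqn:E1, (A2 m l) eqn:E2; try congruence.
    + apply (fnull_mono NP _ (fun th => Dv A1 i (S m) l th = 0)).
      * intros th. simpl Dv at 2. rewrite E2. lra.
      * apply Dv_nonzero; auto.
    + apply (fnull_mono NP _ (fun th => Dv A2 i (S m) l th = 0)).
      * intros th. simpl Dv at 1. rewrite E1. lra.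
      * apply Dv_nonzero; auto.
  - (* They agree on layer [m]: propagate the difference through an active neuron. *)
    assert (Hk' : (k < m)%nat).
    { destruct (Nat.eq_dec k m) as [->|]; [exfalso; apply Hno; eauto|lia]. }
    destruct IH as [p [Hp Hnull]]; [lia|exists k, j; auto|].
    destruct (H1 m ltac:(lia)) as [l [Hl HA1]].
    assert (HA2 : A2 m l = true).
    { destruct (Bool.bool_dec (A1 m l) (A2 m l)); [congruence|exfalso; apply Hno; eauto]. }
    exists l. split; [exact Hl|].
    apply (fnull_mono NP _ (fun th => rsum (np m)
      (fun x => th (wi m l x) * (Dv A1 i m x th - Dv A2 i m x th)) = 0)).
    { intros th Hz. rewrite <- Hz, !Dv_on, <- rsum_minus by auto.
      apply rsum_ext. intros; ring. }
    apply (null_layer_sum m l _ p); auto.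
    + intros x Hx. apply locLip_minus; apply Dv_locLip; auto.
    + intros x v Hx Hv. apply indep_minus; apply Dv_indep; auto.
Qed.

(* The [i]-th partial derivative of the network on the region of [A]. *)
Definition gF (A : pattern) (i : nat) (th : nat -> R) : R :=
  rsum (np dp) (fun j => th (oi j) * Dv A i dp j th).

(* Distinct admissible patterns have almost everywhere distinct [i]-th partial
   derivatives: the difference is a sum over the output weights. *)
Lemma gF_separate A1 A2 i :
  (i < n_in)%nat -> active_each_layer widths A1 -> active_each_layer widths A2 ->
  ~ pattern_eq widths A1 A2 -> fnull NP (fun th => gF A1 i th = gF A2 i th).
Proof.
  intros Hi H1 H2 Hne.
  assert (Hd : exists k j, (k < dp)%nat /\ (j < wd k)%nat /\ A1 k j <> A2 k j).
  { apply NNPP. intros Hno. apply Hne. intros k j Hk Hj.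
    destruct (Bool.bool_dec (A1 k j) (A2 k j)); auto. exfalso; eauto 6. }
  destruct (Dv_separate A1 A2 i Hi H1 H2 dp (le_n _) Hd) as [p [Hp Hnull]].
  apply (fnull_mono NP _ (fun th => rsum (np dp)
    (fun x => th (oi x) * (Dv A1 i dp x th - Dv A2 i dp x th)) = 0)).
  { intros th Hz. unfold gF in Hz.
    rewrite (rsum_ext _ _ (fun x => th (oi x) * Dv A1 i dp x th - th (oi x) * Dv A2 i dp x th)),
      rsum_minus by (intros; ring). lra. }
  apply (null_weighted_sum NP (ofs dp) _ oi _ p); auto.
  - intros x Hx. apply oidx_range; auto.
  - unfold oidx. intros; lia.
  - intros x Hx. apply locLip_minus; apply Dv_locLip; auto.
  - intros x v Hx Hv. apply indep_minus; apply Dv_indep; auto.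
Qed.

Lemma Dv_resp A A' i :
  pattern_eq widths A A' -> forall m j th, (j < np m)%nat -> Dv A i m j th = Dv A' i m j th.
Proof.
  intros H. induction m as [|m IH]; intros j th Hj; auto. simpl in Hj. simpl.
  rewrite (H m j); [|apply width_lt; lia|auto].
  destruct (A' m j); auto. apply rsum_ext. intros. rewrite IH; auto.
Qed.

Lemma gF_resp A A' i th : pattern_eq widths A A' -> gF A i th = gF A' i th.
Proof. intros H. apply rsum_ext. intros. rewrite (Dv_resp A A' i H); auto. Qed.

End Derivatives.

Lemma cont_const c t0 : continuity_pt (fun _ => c) t0.
Proof. apply continuity_pt_const. intros x y; auto. Qed.

Lemma cont_rsum n (f : nat -> R -> R) t0 :
  (forall j, (j < n)%nat -> continuity_pt (f j) t0) ->
  continuity_pt (fun t => rsum n (fun j => f j t)) t0.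
Proof.
  induction n as [|n IH]; intros H; [apply (cont_const 0)|].
  apply (continuity_pt_plus (fun t => rsum n (fun j => f j t)) (f n));
    [apply IH; intros|]; apply H; lia.
Qed.

Lemma cont_relu g t0 : continuity_pt g t0 -> continuity_pt (fun t => relu (g t)) t0.
Proof.
  intros H.
  replace (fun t => relu (g t)) with (fun t => / 2 * (g t + Rabs (g t))).
  - apply continuity_pt_mult; [apply cont_const|]. apply continuity_pt_plus; auto.
    apply (continuity_pt_comp g Rabs); auto. apply Rcontinuity_abs.
  - apply functional_extensionality. intros t. unfold relu, Rmax.
    destruct (Rle_dec 0 (g t)); [rewrite Rabs_right|rewrite Rabs_left]; lra.
Qed.

Lemma cont_sign g :
  continuity_pt g 0 -> g 0 > 0 -> exists d, 0 < d /\ forall t, Rabs t < d -> g t > 0.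
Proof.
  intros H Hg. destruct (H (g 0) Hg) as [alp [Ha F]]. exists alp. split; [lra|].
  intros t Ht. destruct (Req_dec t 0) as [->|Hne]; auto.
  assert (Hdist : R_dist (g t) (g 0) < g 0).
  { apply F. split; [split; [exact I|auto]|]. simpl. unfold R_dist. rewrite Rminus_0_r. auto. }
  unfold R_dist in Hdist. pose proof (Rle_abs (g 0 - g t)). rewrite Rabs_minus_sym in Hdist. lra.
Qed.

Lemma fin_delta n (Q : nat -> R -> Prop) :
  (forall j, (j < n)%nat -> exists d, 0 < d /\ forall t, Rabs t < d -> Q j t) ->
  exists d, 0 < d /\ forall t, Rabs t < d -> forall j, (j < n)%nat -> Q j t.
Proof.
  induction n as [|n IH]; intros H; [exists 1; split; [lra|intros; lia]|].
  destruct IH as [d1 [H1 F1]]; [intros; apply H; lia|].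
  destruct (H n (Nat.lt_succ_diag_r n)) as [d2 [H2 F2]].
  exists (Rmin d1 d2). split; [apply Rmin_glb_lt; auto|]. intros t Ht j Hj.
  pose proof (Rmin_l d1 d2). pose proof (Rmin_r d1 d2).
  destruct (Nat.eq_dec j n) as [->|]; [apply F2; lra|apply F1; [lra|lia]].
Qed.

Section Gradient.
Variable n_in : nat.
Variable widths : list nat.
Local Notation np := (nprev n_in widths).
Local Notation wd := (width widths).
Local Notation dp := (depth widths).
Local Notation wi := (widx n_in widths).
Local Notation oi := (oidx n_in widths).

Definition line (x : nat -> R) (i : nat) (t : R) : nat -> R := fun m => x m + t * unit_vec i m.

Lemma line0 x i : line x i 0 = x.
Proof. apply functional_extensionality; intros; unfold line; ring. Qed.

Lemma post_line A th x i t :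
  in_region n_in widths A th x -> in_region n_in widths A th (line x i t) ->
  forall m j, (j < np m)%nat ->
  post n_in widths th (line x i t) m j = post n_in widths th x m j + t * Dv n_in widths A i m j th.
Proof.
  intros R1 R2. induction m as [|m IH]; intros j Hj; [reflexivity|].
  simpl in Hj. assert (Hm : (m < dp)%nat) by (apply width_lt; lia).
  specialize (R1 m j Hm Hj). specialize (R2 m j Hm Hj). unfold preact in R1, R2.
  assert (Hsum : rsum (np m) (fun x' => th (wi m j x') * post n_in widths th (line x i t) m x')
    = rsum (np m) (fun x' => th (wi m j x') * post n_in widths th x m x')
      + t * rsum (np m) (fun x' => th (wi m j x') * Dv n_in widths A i m x' th)).
  { rewrite <- rsum_scal, <- rsum_plus. apply rsum_ext. intros x' Hx'. rewrite IH by auto. ring. }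
  rewrite Hsum in R2. simpl post. simpl Dv. rewrite Hsum.
  unfold relu. destruct (A m j).
  - rewrite !Rmax_right by lra. ring.
  - rewrite !Rmax_left by lra. ring.
Qed.

Lemma net_line A th x i t :
  in_region n_in widths A th x -> in_region n_in widths A th (line x i t) ->
  net n_in widths th (line x i t) = net n_in widths th x + t * gF n_in widths A i th.
Proof.
  intros R1 R2. unfold net, gF.
  rewrite (rsum_ext _ _ (fun j => th (oi j) * post n_in widths th x dp j
    + t * (th (oi j) * Dv n_in widths A i dp j th))).
  - rewrite rsum_plus, rsum_scal. ring.
  - intros j Hj. rewrite (post_line A th x i t R1 R2) by auto. ring.
Qed.

Lemma post_cont th x i m j : continuity_pt (fun t => post n_in widths th (line x i t) m j) 0.
Proof.
  revert j. induction m as [|m IH]; intros j; simpl.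
  - unfold line. apply continuity_pt_plus; [apply cont_const|].
    apply continuity_pt_mult; [apply derivable_continuous_pt, derivable_pt_id|apply cont_const].
  - apply cont_relu, continuity_pt_minus; [|apply cont_const].
    apply (cont_rsum _ (fun x' t => th (wi m j x') * post n_in widths th (line x i t) m x')).
    intros. apply continuity_pt_mult; auto. apply cont_const.
Qed.

Lemma region_near A th x i :
  in_region n_in widths A th x ->
  exists d, 0 < d /\ forall t, Rabs t < d -> in_region n_in widths A th (line x i t).
Proof.
  intros R. set (g := fun k j t =>
    preact n_in widths th (line x i t) k j - th (bidx n_in widths k j)).
  destruct (fin_delta dp (fun k t => forall j, (j < wd k)%nat ->
    if A k j then g k j t > 0 else g k j t < 0)) as [d [Hd F]].
  { intros k Hk. apply (fin_delta (wd k) (fun j t => if A k j then g k j t > 0 else g k j t < 0)).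
    intros j Hj. specialize (R k j Hk Hj).
    assert (Hc : continuity_pt (g k j) 0).
    { apply continuity_pt_minus; [|apply cont_const]. unfold preact.
      apply (cont_rsum _ (fun x' t => th (wi k j x') * post n_in widths th (line x i t) k x')).
      intros. apply continuity_pt_mult; [apply cont_const|apply post_cont]. }
    assert (Hg0 : g k j 0 = preact n_in widths th x k j - th (bidx n_in widths k j))
      by (unfold g; rewrite line0; auto).
    destruct (A k j).
    - apply cont_sign; auto. lra.
    - destruct (cont_sign (fun t => - g k j t)) as [d [Hd F]].
      + apply continuity_pt_opp; auto.
      + lra.
      + exists d. split; auto. intros t Ht. specialize (F t Ht). lra. }
  exists d. split; auto. intros t Ht k j Hk Hj. apply (F t Ht k Hk j Hj).
Qed.

Lemma gradient_in_region A th x :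
  in_region n_in widths A th x -> is_gradient n_in widths th x (fun i => gF n_in widths A i th).
Proof.
  intros R i Hi. destruct (region_near A th x i R) as [d [Hd F]].
  intros eps He. exists (mkposreal d Hd). intros h Hh0 Hh. simpl in Hh.
  change (Rabs ((net n_in widths th (line x i (0 + h)) - net n_in widths th (line x i 0)) / h
    - gF n_in widths A i th) < eps).
  rewrite Rplus_0_l, line0, (net_line A th x i h R (F h Hh)).
  replace ((net n_in widths th x + h * gF n_in widths A i th - net n_in widths th x) / h
    - gF n_in widths A i th) with 0 by (field; auto).
  rewrite Rabs_R0. auto.
Qed.

(* Without inputs all pre-activations are constants, so at most one pattern
   has a nonempty region. *)
Lemma post_no_input th :
  n_in = O -> forall m j x y, post n_in widths th x (S m) j = post n_in widths th y (S m) j.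
Proof.
  intros H0. induction m as [|m IH]; intros j x y.
  - simpl. unfold nprev. rewrite H0. auto.
  - change (post n_in widths th x (S (S m)) j) with
      (relu (rsum (np (S m)) (fun j' => th (wi (S m) j j') * post n_in widths th x (S m) j')
        - th (bidx n_in widths (S m) j))).
    rewrite (rsum_ext _ _ (fun j' => th (wi (S m) j j') * post n_in widths th y (S m) j')); auto.
    intros j' _. rewrite (IH j' x y). auto.
Qed.

Lemma regions_no_input A1 A2 th x1 x2 :
  n_in = O -> in_region n_in widths A1 th x1 -> in_region n_in widths A2 th x2 ->
  pattern_eq widths A1 A2.
Proof.
  intros H0 R1 R2 k j Hk Hj. specialize (R1 k j Hk Hj). specialize (R2 k j Hk Hj).
  assert (E : preact n_in widths th x1 k j = preact n_in widths th x2 k j).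
  { unfold preact. destruct k as [|k].
    - unfold nprev. rewrite H0. auto.
    - apply rsum_ext. intros. rewrite (post_no_input th H0 k i x1 x2). auto. }
  rewrite E in R1. destruct (A1 k j), (A2 k j); auto; lra.
Qed.

End Gradient.

Lemma bool_restrictions w :
  exists L : list (nat -> bool), forall f, exists g, In g L /\ forall j, (j < w)%nat -> f j = g j.
Proof.
  induction w as [|w [L HL]]; [exists ((fun _ => false) :: nil); intros f; exists (fun _ => false);
    split; [left; auto|intros; lia]|].
  set (ext := fun (g : nat -> bool) b j => if Nat.eqb j w then b else g j).
  exists (flat_map (fun g => ext g false :: ext g true :: nil) L). intros f.
  destruct (HL f) as [g [Hg Hfg]]. exists (ext g (f w)). split.
  - apply in_flat_map. exists g. split; auto. destruct (f w); simpl; auto.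
  - intros j Hj. unfold ext. destruct (Nat.eqb_spec j w) as [->|]; auto. apply Hfg. lia.
Qed.

Lemma pattern_restrictions (wf : nat -> nat) n :
  exists L : list pattern, forall A : pattern, exists R, In R L /\
    forall k j, (k < n)%nat -> (j < wf k)%nat -> A k j = R k j.
Proof.
  induction n as [|n [L HL]]; [exists ((fun _ _ => false) :: nil); intros A;
    exists (fun _ _ => false); split; [left; auto|intros; lia]|].
  destruct (bool_restrictions (wf n)) as [Lw HLw].
  set (ext := fun (R : pattern) (g : nat -> bool) k j => if Nat.eqb k n then g j else R k j).
  exists (flat_map (fun R => map (ext R) Lw) L). intros A.
  destruct (HL A) as [R [HR HAR]], (HLw (A n)) as [g [Hg HAg]]. exists (ext R g). split.
  - apply in_flat_map. exists R. split; auto. apply in_map; auto.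
  - intros k j Hk Hj. unfold ext. destruct (Nat.eqb_spec k n) as [->|]; auto. apply HAR; auto; lia.
Qed.

Lemma active_resp widths A A' :
  pattern_eq widths A A' -> active_each_layer widths A -> active_each_layer widths A'.
Proof.
  intros H HA k Hk. destruct (HA k Hk) as [j [Hj HAj]]. exists j. rewrite <- (H k j); auto.
Qed.

(* Outside a null set of parameters, any two admissible patterns (active in
   every layer, different on some neuron) have different first partial
   derivatives; up to [pattern_eq] there are only finitely many pairs. *)
Lemma separating_parameters n_in widths :
  (0 < n_in)%nat ->
  exists Null : (nat -> R) -> Prop, lebesgue_null (nparams n_in widths) Null /\
    forall th A1 A2, active_each_layer widths A1 -> active_each_layer widths A2 ->
      ~ pattern_eq widths A1 A2 -> gF n_in widths A1 0 th = gF n_in widths A2 0 th -> Null th.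
Proof.
  intros Hin. destruct (pattern_restrictions (width widths) (depth widths)) as [L HL].
  set (bad := fun R1 R2 th =>
    (active_each_layer widths R1 /\ active_each_layer widths R2 /\ ~ pattern_eq widths R1 R2)
    /\ gF n_in widths R1 0 th = gF n_in widths R2 0 th).
  exists (fun th => exists R1, In R1 L /\ exists R2, In R2 L /\ bad R1 R2 th). split.
  - apply fnull_lebesgue; [unfold nparams; lia|].
    apply (fnull_list _ L (fun R1 th => exists R2, In R2 L /\ bad R1 R2 th)). intros R1 _.
    apply (fnull_list _ L (bad R1)). intros R2 _.
    apply fnull_guard. intros [Ha1 [Ha2 Hne]]. apply gF_separate; auto.
  - intros th A1 A2 Ha1 Ha2 Hne E.
    destruct (HL A1) as [Q1 [HQ1 P1]], (HL A2) as [Q2 [HQ2 P2]].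
    change (pattern_eq widths A1 Q1) in P1. change (pattern_eq widths A2 Q2) in P2.
    exists Q1. split; auto. exists Q2. split; auto. split; [split; [|split]|].
    + apply (active_resp widths A1); auto.
    + apply (active_resp widths A2); auto.
    + intros Hq. apply Hne. intros k j Hk Hj. rewrite (P1 k j), (P2 k j); auto.
    + rewrite <- (gF_resp n_in widths A1 Q1 0 th P1), <- (gF_resp n_in widths A2 Q2 0 th P2).
      exact E.
Qed.

Theorem mainTheorem9 (n_in : nat) (widths : list nat) :
  exists Null : (nat -> R) -> Prop,
    lebesgue_null (nparams n_in widths) Null /\
    forall th : nat -> R, ~ Null th ->
    forall A1 A2 : pattern,
      ~ pattern_eq widths A1 A2 ->
      (exists x, in_region n_in widths A1 th x) ->
      (exists x, in_region n_in widths A2 th x) ->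
      active_each_layer widths A1 ->
      active_each_layer widths A2 ->
      forall x1 x2,
        in_region n_in widths A1 th x1 ->
        in_region n_in widths A2 th x2 ->
        exists g1 g2 : nat -> R,
          is_gradient n_in widths th x1 g1 /\
          is_gradient n_in widths th x2 g2 /\
          exists i, (i < n_in)%nat /\ g1 i <> g2 i.
Proof.
  destruct (Nat.eq_dec n_in 0) as [H0|Hin].
  -
    exists (fun _ => False). split; [apply fnull_lebesgue, fnull_empty; unfold nparams; lia|].
    intros th _ A1 A2 Hne _ _ _ _ x1 x2 R1 R2.
    exfalso. exact (Hne (regions_no_input n_in widths A1 A2 th x1 x2 H0 R1 R2)).
  -
    destruct (separating_parameters n_in widths ltac:(lia)) as [Null [HNull Hsep]].
    exists Null. split; auto.
    intros th Hth A1 A2 Hne _ _ Ha1 Ha2 x1 x2 R1 R2.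
    exists (fun i => gF n_in widths A1 i th), (fun i => gF n_in widths A2 i th).
    split; [|split]; [apply gradient_in_region; auto|apply gradient_in_region; auto|].
    exists 0%nat. split; [lia|]. intros E. exact (Hth (Hsep th A1 A2 Ha1 Ha2 Hne E)).
Qed.
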